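(* Let the target $m$ and surrogate $\tilde m$ be binary classifiers on $[0,1]^d$ that are locally Lipschitz continuous with constants $\gamma_m$ and $\gamma_{\tilde m}$ respectively (not necessarily ReLU), such that $m(\boldsymbol{w})=\tilde m(\boldsymbol{w})$ for every counterfactual $\boldsymbol{w}$. Assume the counterfactuals form a $\delta$-cover of the decision boundary of $m$. Then $|\tilde m(\boldsymbol{x})-m(\boldsymbol{x})|\le(\gamma_m+\gamma_{\tilde m})\,\delta$ for every $\boldsymbol{x}$ on the decision boundary of $m$.
   Context: A binary classifier $m:[0,1]^d\to[0,1]$ has predicted class $\mathds{1}[m(\boldsymbol{x})\ge0.5]$ and decision boundary $\{\boldsymbol{x}:m(\boldsymbol{x})=0.5\}$. A model $m$ is locally Lipschitz continuous (with constant $\gamma\ge0$) if for every $\boldsymbol{x}_1\in[0,1]^d$ there is a neighborhood $\mathbb{B}_{\boldsymbol{x}_1}\subseteq[0,1]^d$ of $\boldsymbol{x}_1$ such that $|m(\boldsymbol{x}_1)-m(\boldsymbol{x}_2)|\le\gamma\|\boldsymbol{x}_1-\boldsymbol{x}_2\|_2$ for all $\boldsymbol{x}_2\in\mathbb{B}_{\boldsymbol{x}_1}$. Counterfactuals are points returned by a counterfactual generator for queries (points of the favorable region obtained from queries in the unfavorable region). The counterfactuals form a $\delta$-cover of the decision boundary if every point $\boldsymbol{x}$ of the decision boundary of $m$ has a counterfactual $\boldsymbol{w}$ with $\|\boldsymbol{x}-\boldsymbol{w}\|_2\le\delta$. *)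

From mathcomp Require Import all_boot all_order all_algebra.
From mathcomp Require Import reals.
Set Implicit Arguments. Unset Strict Implicit. Unset Printing Implicit Defensive.
Import Order.TTheory GRing.Theory Num.Theory.
Local Open Scope ring_scope.

Definition norm2 {R : realType} {d : nat} (x : 'rV[R]_d) : R :=
  Num.sqrt (\sum_(i < d) (x ord0 i) ^+ 2).

Definition in_cube {R : realType} {d : nat} (x : 'rV[R]_d) : Prop :=
  forall i : 'I_d, 0 <= x ord0 i <= 1.

Definition classifier {R : realType} {d : nat} (m : 'rV[R]_d -> R) : Prop :=
  forall x, in_cube x -> 0 <= m x <= 1.

Definition on_boundary {R : realType} {d : nat} (m : 'rV[R]_d -> R)
  (x : 'rV[R]_d) : Prop := in_cube x /\ m x = 2^-1.

Definition locally_lipschitz {R : realType} {d : nat} (m : 'rV[R]_d -> R)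
  (gamma : R) : Prop :=
  0 <= gamma /\
  forall x1, in_cube x1 -> exists2 r : R, 0 < r &
    forall x2, in_cube x2 -> norm2 (x1 - x2) < r ->
      `|m x1 - m x2| <= gamma * norm2 (x1 - x2).

Definition delta_cover {R : realType} {d : nat} (m : 'rV[R]_d -> R)
  (C : 'rV[R]_d -> Prop) (delta : R) : Prop :=
  forall x, on_boundary m x -> exists2 w, C w & norm2 (x - w) <= delta.

From mathcomp Require Import all_boot all_order all_algebra.
From mathcomp Require Import reals.
From mathcomp Require Import classical_sets lra.
Set Implicit Arguments. Unset Strict Implicit. Unset Printing Implicit Defensive.
Import Order.TTheory GRing.Theory Num.Theory.
Local Open Scope ring_scope.

(* A function that is locally gamma-Lipschitz on the cube is globally
   gamma-Lipschitz there: restrict it to the segment from x to w (the cube is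
   convex) and run a continuous induction -- the supremum of the times up to
   which the Lipschitz bound from x holds cannot stop short of w, because the
   local bound around that supremum carries it further.  For x on the decision
   boundary and a counterfactual w within delta of x, where m and mt agree,
   |mt x - m x| <= |mt x - mt w| + |m w - m x| <= (gmt + gm) delta. *)

Section LocallyLipschitzSegment.
Local Open Scope classical_set_scope.
Variables (R : realType) (g : R -> R) (K a b : R).
Hypothesis a_le_b : a <= b.
Hypothesis g_loclip : forall t, a <= t <= b -> exists2 r : R, 0 < r &
  forall s, a <= s <= b -> `|t - s| < r -> `|g t - g s| <= K * `|t - s|.

Let good (t : R) : Prop :=
  a <= t <= b /\ forall s, a <= s <= t -> `|g a - g s| <= K * (s - a).

Let good_a : good a.
Proof.
split; first by rewrite lexx a_le_b.
move=> s /andP[aLs sLa]; have -> : s = a by apply/eqP; rewrite eq_le sLa aLs.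
by rewrite !subrr normr0 mulr0.
Qed.

Let has_sup_good : has_sup good.
Proof. by split; [exists a | exists b => t [/andP[_ ->]]]. Qed.

Let sup_good_in : a <= sup good <= b.
Proof.
rewrite sup_upper_bound //=; apply: ge_sup; first by exists a.
by move=> t [/andP[_ ->]].
Qed.

Let good_beyond_sup : exists2 r : R, 0 < r & forall s, a <= s <= b ->
  s < sup good + r -> `|g a - g s| <= K * (s - a).
Proof.
have [r r0 lipT] := g_loclip sup_good_in.
set T := sup good in lipT *.
exists r => // s /andP[aLs sLb] sTr.
have [sT|Ts] := ltP s T.
  have [t [_ good_t] sLt] := sup_adherent (ltac:(by rewrite subr_gt0) : 0 < T - s)
    has_sup_good.
  by apply: good_t; rewrite aLs /=; move: sLt; rewrite -/T; lra.
have [t good_t tT] := sup_adherent r0 has_sup_good; rewrite -/T in tT.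
have tleT : t <= T by exact: sup_upper_bound good_t.
case: good_t => /andP[aLt tLb] good_t.
have gat := good_t t (ltac:(by rewrite aLt lexx) : a <= t <= t).
have gtT : `|g T - g t| <= K * `|T - t|.
  by apply: lipT; [rewrite aLt tLb | rewrite ger0_norm ?subr_ge0 //; lra].
have gTs : `|g T - g s| <= K * `|T - s|.
  by apply: lipT; [rewrite aLs sLb | rewrite ler0_norm ?subr_le0 //; lra].
rewrite (ger0_norm (_ : 0 <= T - t)) ?subr_ge0 // (distrC (g T)) in gtT.
rewrite (ler0_norm (_ : T - s <= 0)) ?subr_le0 // in gTs.
have := ler_normD (g a - g t) (g t - g s).
have := ler_normD (g t - g T) (g T - g s).
rewrite !subrKA; lra.
Qed.

Let sup_good_eq : sup good = b.
Proof.
have [r r0 beyond] := good_beyond_sup; have /andP[aT Tb] := sup_good_in.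
apply/eqP; rewrite eq_le Tb /= leNgt; apply/negP => Tltb.
pose t := Num.min b (sup good + r / 2).
have good_t : good t.
  split; first by rewrite /t ge_min lexx le_min a_le_b /=; lra.
  move=> s /andP[aLs sLt]; apply: beyond.
  - by apply/andP; split; [|move: sLt; rewrite le_min => /andP[]].
  - by move: sLt; rewrite le_min => /andP[_]; lra.
have : t <= sup good := sup_upper_bound has_sup_good good_t.
by rewrite /t ge_min => /orP[]; lra.
Qed.

Lemma locally_lipschitz_segment : `|g a - g b| <= K * (b - a).
Proof.
have [r r0 beyond] := good_beyond_sup.
by apply: beyond; [rewrite a_le_b lexx | rewrite sup_good_eq; lra].
Qed.

End LocallyLipschitzSegment.

Lemma norm2_ge0 (R : realType) (d : nat) (v : 'rV[R]_d) : 0 <= norm2 v.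
Proof. exact: sqrtr_ge0. Qed.

Lemma norm2Z (R : realType) (d : nat) (c : R) (v : 'rV[R]_d) :
  norm2 (c *: v) = `|c| * norm2 v.
Proof.
rewrite /norm2 -sqrtr_sqr -sqrtrM ?sqr_ge0 // mulr_sumr; congr Num.sqrt.
by apply: eq_bigr => i _; rewrite mxE exprMn.
Qed.

Lemma norm2N (R : realType) (d : nat) (v : 'rV[R]_d) : norm2 (- v) = norm2 v.
Proof. by rewrite -scaleN1r norm2Z normrN normr1 mul1r. Qed.

Lemma in_cube_segment (R : realType) (d : nat) (x w : 'rV[R]_d) (s : R) :
  in_cube x -> in_cube w -> 0 <= s <= 1 -> in_cube (x + s *: (w - x)).
Proof.
move=> cx cw /andP[s0 s1] i; rewrite !mxE.
have /andP[? ?] := cx i; have /andP[? ?] := cw i.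
by apply/andP; split; nra.
Qed.

Lemma locally_lipschitz_cube (R : realType) (d : nat) (f : 'rV[R]_d -> R)
    (gamma : R) (x w : 'rV[R]_d) :
  locally_lipschitz f gamma -> in_cube x -> in_cube w ->
  `|f x - f w| <= gamma * norm2 (x - w).
Proof.
move=> [_ f_loclip] cx cw; set L := norm2 (x - w).
have [L0|L_neq0] := eqVneq L 0.
  by have [r r0 lipx] := f_loclip x cx; apply: lipx; rewrite // -/L L0.
have L_gt0 : 0 < L by rewrite lt_def L_neq0 norm2_ge0.
pose p (s : R) := x + s *: (w - x).
have dist_p s t : norm2 (p s - p t) = `|s - t| * L.
  rewrite /p opprD addrACA subrr add0r -scalerBl norm2Z.
  by rewrite /L -(opprB w x) norm2N.
have p0 : p 0 = x by rewrite /p scale0r addr0.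
have p1 : p 1 = w by rewrite /p scale1r addrC subrK.
have := @locally_lipschitz_segment R (f \o p) (gamma * L) 0 1 ler01.
rewrite /= p0 p1 subr0 mulr1; apply=> t t01.
have [r r0 lipt] := f_loclip (p t) (in_cube_segment cx cw t01).
exists (r / L) => [|s s01 tsr]; first by rewrite divr_gt0.
rewrite -mulrA (mulrC L) -dist_p; apply: lipt; first exact: in_cube_segment.
by rewrite dist_p -ltr_pdivlMr.
Qed.

Theorem corollary2 (R : realType) (d : nat)
  (m mt : 'rV[R]_d -> R) (gm gmt delta : R) (C : 'rV[R]_d -> Prop) :
  classifier m -> classifier mt ->
  locally_lipschitz m gm -> locally_lipschitz mt gmt ->
  (* counterfactuals are points of the favourable region of [0,1]^d *)
  (forall w, C w -> in_cube w /\ 2^-1 <= m w) ->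
  (forall w, C w -> m w = mt w) ->
  delta_cover m C delta ->
  forall x, on_boundary m x -> `|mt x - m x| <= (gm + gmt) * delta.
Proof.
move=> _ _ lip_m lip_mt C_cube C_agree cover x x_bd.
have [w Cw xw_le] := cover x x_bd.
have [cx _] := x_bd.
have [cw _] := C_cube w Cw.
have m_xw := locally_lipschitz_cube lip_m cx cw.
have mt_xw := locally_lipschitz_cube lip_mt cx cw.
rewrite -(C_agree w Cw) in mt_xw.
have := ler_wpM2l lip_m.1 xw_le; have := ler_wpM2l lip_mt.1 xw_le.
have := ler_normD (mt x - m w) (m w - m x).
by rewrite subrKA distrC in m_xw *; lra.
Qed.
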